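(* For all integers $s\geq 3$, $\chi(\operatorname{KG}(2s+2,2)_{s-\operatorname{stab}})=s+2$, and $\operatorname{KG}(2s+2,2)_{s-\operatorname{stab}}$ is not $\chi$-critical.
   Context: For integers $s,k\geq 2$ and $n\geq ks$, a subset $S\subseteq[n]=\{1,\dots,n\}$ is $s$-stable if $s\leq |i-j|\leq n-s$ for all distinct $i,j\in S$. The $s$-stable Kneser graph $\operatorname{KG}(n,k)_{s-\operatorname{stab}}$ has as vertices the $s$-stable $k$-subsets of $[n]$, two vertices being adjacent iff they are disjoint. A graph $G$ is $\chi$-critical (vertex critical) if every proper subgraph of $G$ has chromatic number strictly less than $\chi(G)$. *)

From mathcomp Require Import all_boot.
Set Implicit Arguments. Unset Strict Implicit. Unset Printing Implicit Defensive.

(* Graphs: a finite vertex set V : {set T} together with an adjacency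
   relation e : rel T (only its restriction to V matters). *)

Definition colorable (T : finType) (V : {set T}) (e : rel T) (k : nat) : Prop :=
  exists f : T -> nat,
    (forall x, x \in V -> f x < k) /\
    (forall x y, x \in V -> y \in V -> e x y -> f x <> f y).

Definition chromatic_number (T : finType) (V : {set T}) (e : rel T) (chi : nat) : Prop :=
  colorable V e chi /\ (forall k, colorable V e k -> chi <= k).

Definition chi_critical (T : finType) (V : {set T}) (e : rel T) : Prop :=
  forall U : {set T}, U \proper V ->
    forall a b, chromatic_number U e a -> chromatic_number V e b -> a < b.

(* [n] = {1,...,n} is modelled by 'I_n (i represents i+1; differences
   are unchanged). *)
Definition dist (i j : nat) : nat := maxn i j - minn i j.

Definition s_stable (n s : nat) (A : {set 'I_n}) : bool :=
  [forall i in A, forall j in A,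
     (i != j) ==> ((s <= dist i j) && (dist i j <= n - s))].

Definition KG_stab_V (n k s : nat) : {set {set 'I_n}} :=
  [set A : {set 'I_n} | (#|A| == k) && s_stable s A].

Definition KG_adj (n : nat) : rel {set 'I_n} :=
  fun A B => [disjoint A & B].

From mathcomp Require Import all_boot zify.

Set Implicit Arguments.
Unset Strict Implicit.
Unset Printing Implicit Defensive.

(* A colour class of a proper colouring is an intersecting family of stable
   pairs.  Three points pairwise at cyclic distance at least s cannot fit on a
   cycle of length 2s+2 when s >= 3, so there is no stable triangle and every
   colour class is a star; the centres of the classes then cover every stable
   pair.  Group the points into the antipodal columns {j, j+s+1}.  The
   complement of a cover of all stable pairs but {0, s+1} meets each column
   other than column 0 at most once, consecutive occupied columns lie on the
   same side, and the pairs {0, s}, {s+1, 2s+1} forbid going all the way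
   round: so it has at most s points and the cover at least s+2.  Hence s+2
   colours are needed even after deleting the vertex {0, s+1}, while s+2
   colours suffice since every stable pair has an element below s+2. *)

Lemma colorable_subset (T : finType) (U V : {set T}) (e : rel T) k :
  U \subset V -> colorable V e k -> colorable U e k.
Proof.
move=> /subsetP UV [f [f_lt f_proper]].
by exists f; split=> [x /UV | x y /UV xV /UV]; [exact: f_lt | exact: f_proper].
Qed.

Lemma KG_adj_colorable_meet n (V : {set {set 'I_n}}) c :
  {in V, forall A : {set 'I_n}, exists2 i : 'I_n, i \in A & i < c} ->
  colorable V (@KG_adj n) c.
Proof.
move=> V_meet.
exists (fun A : {set 'I_n} => if [pick i in A | i < c] is Some i then val i else 0); split.
- move=> A /V_meet [i iA ic]; case: pickP => [j /andP [_ //] | /(_ i)].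
  by rewrite iA ic.
- move=> A B /V_meet [i iA ic] /V_meet [j jB jc] AB.
  case: pickP => [i' /andP [i'A _] | /(_ i)]; last by rewrite iA ic.
  case: pickP => [j' /andP [j'B _] | /(_ j)]; last by rewrite jB jc.
  move=> /val_inj eq_ij; move: AB; rewrite /KG_adj => /disjointFr/(_ i'A).
  by rewrite eq_ij j'B.
Qed.

Lemma meet_set2 (T : finType) (a b : T) (B : {set T}) :
  ~~ [disjoint [set a; b] & B] -> (a \in B) || (b \in B).
Proof.
rewrite -setI_eq0 => /set0Pn [z]; rewrite !inE => /andP [].
by case/orP => /eqP -> ->; rewrite ?orbT.
Qed.

Lemma card2_set2 (T : finType) (A : {set T}) (a b : T) :
  #|A| = 2 -> a \in A -> b \in A -> a != b -> A = [set a; b].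
Proof.
move=> cardA aA bA ab; apply/esym/eqP; rewrite eqEcard cardA cards2 ab andbT.
by apply/subsetP => z; rewrite !inE => /orP [] /eqP ->.
Qed.

Lemma intersecting_pairs_star (T : finType) (x0 : T) (F : {set {set T}}) :
  {in F, forall A : {set T}, #|A| = 2} ->
  {in F &, forall A B : {set T}, ~~ [disjoint A & B]} ->
  (forall a b c, [set a; b] \in F -> [set b; c] \in F -> [set a; c] \notin F) ->
  exists x : T, {in F, forall A : {set T}, x \in A}.
Proof.
move=> F2 F_meet F_triangle_free.
have [-> | [A AF]] := set_0Vmem F; first by exists x0 => A; rewrite inE.
have /eqP/cards2P [a [b [ab defA]]] := F2 A AF.
case: (pickP [pred B in F | a \notin B]) => [B /andP [BF aB] | a_all]; last first.
  by exists a => B BF; move: (a_all B); rewrite /= BF => /negbFE.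
case: (pickP [pred C in F | b \notin C]) => [C /andP [CF bC] | b_all]; last first.
  by exists b => C CF; move: (b_all C); rewrite /= CF => /negbFE.
have bB : b \in B.
  by move: (F_meet A B AF BF); rewrite defA => /meet_set2; rewrite (negbTE aB).
have aC : a \in C.
  by move: (F_meet A C AF CF); rewrite defA => /meet_set2; rewrite (negbTE bC) orbF.
have /set0Pn [z] : B :&: C != set0 by rewrite setI_eq0; exact: F_meet.
rewrite inE => /andP [zB zC].
have defB : B = [set b; z].
  by apply: card2_set2; rewrite ?F2 //; apply: contraNneq bC => ->.
have defC : [set a; z] = C.
  by apply/esym/card2_set2; rewrite ?F2 //; apply: contraNneq aB => ->.
by move: (F_triangle_free a b z); rewrite -defA -defB defC AF BF CF => /(_ isT isT).
Qed.

Lemma big_nat_halves (F : nat -> nat) m :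
  \sum_(0 <= i < m + m) F i = \sum_(0 <= j < m) (F j + F (j + m)).
Proof.
rewrite (big_cat_nat _ (leq_addr m m)) //= big_split /=; congr (_ + _).
by rewrite -{1}[m]add0n big_addn addnK.
Qed.

Section AntipodalIndependentSet.

Variables (s : nat) (p : nat -> bool).
Hypothesis s_ge2 : 2 <= s.
Hypothesis p_indep : forall a b, a < b < 2 * s + 2 -> s <= b - a <= s + 2 ->
  ~~ ((a == 0) && (b == s.+1)) -> ~~ (p a && p b).

(* p is an independent set of the stable pairs of [0, 2s+2) other than
   {0, s+1}; col j counts its points in the column {j, j+s+1}. *)
Let col j := p j + p (j + s.+1).

Lemma col_le1 j : 0 < j <= s -> col j <= 1.
Proof.
move=> hj; have : ~~ (p j && p (j + s.+1)) by apply: p_indep; lia.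
by rewrite /col; case: (p j); case: (p _).
Qed.

Lemma col_same_side j : j < s -> 0 < col j.+1 ->
  (p j -> p j.+1) /\ (p (j + s.+1) -> p (j.+1 + s.+1)).
Proof.
move=> hj; have : ~~ (p j && p (j.+1 + s.+1)) by apply: p_indep; lia.
have : ~~ (p j.+1 && p (j + s.+1)) by apply: p_indep; lia.
rewrite /col; case: (p j.+1); case: (p (j.+1 + _)) => //=;
  by case: (p j); case: (p (j + _)).
Qed.

Lemma col_sum_chain a d : a + d <= s -> col a <= 1 ->
  \sum_(a <= j < (a + d).+1) col j <=
    d + ((p a && p (a + d)) || (p (a + s.+1) && p (a + d + s.+1))).
Proof.
move=> had col_a; elim: d had => [|d IH] hd.
  by rewrite addn0 big_nat1; move: col_a; rewrite /col; case: (p a); case: (p _).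
rewrite addnS big_nat_recr /=; last by lia.
have /IH le_sum : a + d <= s by lia.
have : col (a + d).+1 <= 1 by apply: col_le1; lia.
case: (posnP (col (a + d).+1)) => [-> | /(col_same_side _)]; first by lia.
by case=> [|same_u same_v]; lia.
Qed.

Lemma antipodal_indep_sum : \sum_(0 <= i < 2 * s + 2) p i <= s.
Proof.
have /negPf W1 : ~~ (p 0 && p s) by apply: p_indep; lia.
have /negPf W2 : ~~ (p s.+1 && p (s + s.+1)) by apply: p_indep; lia.
rewrite (_ : 2 * s + 2 = s.+1 + s.+1) ?big_nat_halves; last by lia.
rewrite -[X in X <= _]/(\sum_(0 <= j < s.+1) col j).
have [/andP [p0 ps1] | col0] := boolP (p 0 && p s.+1); last first.
  have := @col_sum_chain 0 s; rewrite !add0n W1 W2 addn0; apply=> //.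
  by rewrite /col add0n; lia.
(* A full column 0 forces column 1 to be empty; restart the chain at column 2. *)
have p1 : ~~ p 1 by rewrite -[p 1]andbT -ps1; apply: p_indep; lia.
have ps2 : ~~ p (1 + s.+1) by rewrite -[p _]andTb -p0; apply: p_indep; lia.
rewrite big_ltn // big_ltn; last by lia.
have := @col_sum_chain 2 (s - 2); rewrite subnKC // addnC.
have := @col_le1 2; move: W1 W2; rewrite /col p0 ps1 /=; lia.
Qed.

End AntipodalIndependentSet.

Lemma KG_stab_cover_card s (P : {set 'I_(2 * s + 2)}) : 2 <= s ->
  (forall x y : 'I_(2 * s + 2), x < y -> s <= y - x <= s + 2 ->
     ~~ ((x == 0 :> nat) && (y == s.+1 :> nat)) -> (x \in P) || (y \in P)) ->
  s + 2 <= #|P|.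
Proof.
move=> s_ge2 P_cover.
pose p i := if insub i : option 'I_(2 * s + 2) is Some x then x \notin P else false.
have pE (x : 'I_(2 * s + 2)) : p x = (x \notin P) by rewrite /p valK.
have : \sum_(0 <= i < 2 * s + 2) p i <= s.
  apply: antipodal_indep_sum => // a b /andP [ab bn] dab excl.
  have an : a < 2 * s + 2 by lia.
  rewrite -[a]/(val (Ordinal an)) -[b]/(val (Ordinal bn)) !pE -negb_or negbK.
  exact: P_cover.
have cardCP : #|~: P| = \sum_(x < 2 * s + 2) p x.
  rewrite -sum1_card big_mkcond; apply: eq_bigr => x _.
  by rewrite pE inE; case: (x \in P).
rewrite big_mkord -cardCP; have := cardsC P; rewrite card_ord; lia.
Qed.

Lemma KG_stab_V_pairE n s (x y : 'I_n) :
  ([set x; y] \in KG_stab_V n 2 s) = [&& x != y, s <= dist x y & dist x y <= n - s].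
Proof.
rewrite inE cards2; have [<- | xy] //= := eqVneq x y.
apply/forallP/andP => [/(_ x) | [d1 d2] i].
  rewrite !inE eqxx /= => /forallP/(_ y); rewrite !inE eqxx orbT.
  by move=> /implyP/(_ isT)/implyP/(_ xy)/andP.
apply/implyP; rewrite !inE => /orP [] /eqP ->; apply/forallP => j;
  apply/implyP; rewrite !inE => /orP [] /eqP ->; rewrite ?eqxx //.
  by rewrite d1 d2 implybT.
by rewrite /dist maxnC minnC d1 d2 implybT.
Qed.

Lemma KG_stab_V_meet_small s (A : {set 'I_(2 * s + 2)}) :
  A \in KG_stab_V (2 * s + 2) 2 s -> exists2 i : 'I_(2 * s + 2), i \in A & i < s + 2.
Proof.
move=> AV; have := AV; rewrite inE => /andP [/cards2P [x [y [_ defA]]] _].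
move: AV; rewrite defA KG_stab_V_pairE /dist => /and3P [_ d1 _].
have [x_small | x_big] := ltnP x (s + 2); first by exists x; rewrite ?inE ?eqxx.
by exists y; rewrite ?inE ?eqxx ?orbT //; have := ltn_ord x; have := ltn_ord y; lia.
Qed.

Lemma KG_stab_triangle_free s (a b c : 'I_(2 * s + 2)) : 3 <= s ->
  [set a; b] \in KG_stab_V (2 * s + 2) 2 s ->
  [set b; c] \in KG_stab_V (2 * s + 2) 2 s ->
  [set a; c] \notin KG_stab_V (2 * s + 2) 2 s.
Proof.
rewrite !KG_stab_V_pairE /dist; have := ltn_ord a; have := ltn_ord b; have := ltn_ord c.
lia.
Qed.

Lemma KG_stab_punctured_colorable_ge s k (x0 x1 : 'I_(2 * s + 2)) :
  3 <= s -> x0 = 0 :> nat -> x1 = s.+1 :> nat ->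
  colorable (KG_stab_V (2 * s + 2) 2 s :\ [set x0; x1]) (@KG_adj _) k -> s + 2 <= k.
Proof.
move=> s_ge3 x0_0 x1_s1 [f [f_lt f_proper]].
set V := KG_stab_V (2 * s + 2) 2 s in f_lt f_proper.
set U := V :\ _ in f_lt f_proper.
have UV A : A \in U -> A \in V by rewrite in_setD1 => /andP [].
have centre (c : 'I_k) : exists x, {in U, forall A, f A = c -> x \in A}.
  have [x x_centre] : exists x,
      {in [set A in U | f A == c], forall A : {set 'I_(2 * s + 2)}, x \in A}.
    apply: (intersecting_pairs_star x0).
    - by move=> A /setIdP [/UV]; rewrite inE => /andP [/eqP].
    - move=> A B /setIdP [AU /eqP fA] /setIdP [BU /eqP fB].
      by apply/negP => AB; move: (f_proper A B AU BU AB); rewrite fA fB.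
    - move=> a b c' /setIdP [/UV abV _] /setIdP [/UV bcV _].
      by apply: contra (KG_stab_triangle_free s_ge3 abV bcV) => /setIdP [/UV].
  by exists x => A AU fA; apply: x_centre; apply/setIdP; rewrite fA.
have [g g_centre] := fin_all_exists centre.
have : s + 2 <= #|[set g c | c : 'I_k]|.
  apply: KG_stab_cover_card => [|x y xy dxy excl]; first by lia.
  have xyV : [set x; y] \in V.
    by rewrite KG_stab_V_pairE /dist -val_eqE !/val /=; have := ltn_ord y; lia.
  have xy_ne : [set x; y] != [set x0; x1].
    apply/eqP => xyE; have := set21 x y; have := set22 x y.
    by rewrite xyE !inE -!val_eqE !/val /= x0_0 x1_s1; lia.
  have xyU : [set x; y] \in U by rewrite in_setD1 xy_ne.
  have := g_centre (Ordinal (f_lt _ xyU)) _ xyU erefl.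
  by rewrite !inE => /orP [] /eqP <-; rewrite imset_f ?orbT.
move/leq_trans; apply; rewrite -[k in _ <= k]card_ord; exact: leq_imset_card.
Qed.

Lemma KG_stab_colorable s : colorable (KG_stab_V (2 * s + 2) 2 s) (@KG_adj _) (s + 2).
Proof. exact/KG_adj_colorable_meet/KG_stab_V_meet_small. Qed.

Theorem mainTheorem3 (s : nat) (hs : 3 <= s) :
  chromatic_number (KG_stab_V (2 * s + 2) 2 s) (@KG_adj (2 * s + 2)) (s + 2) /\
  ~ chi_critical (KG_stab_V (2 * s + 2) 2 s) (@KG_adj (2 * s + 2)).
Proof.
have x0_lt : 0 < 2 * s + 2 by lia.
have x1_lt : s.+1 < 2 * s + 2 by lia.
pose x0 := Ordinal x0_lt; pose x1 := Ordinal x1_lt.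
pose V := KG_stab_V (2 * s + 2) 2 s.
have e0V : [set x0; x1] \in V by rewrite KG_stab_V_pairE /dist -val_eqE /=; lia.
have lbU k : colorable (V :\ [set x0; x1]) (@KG_adj _) k -> s + 2 <= k.
  exact: KG_stab_punctured_colorable_ge.
have chiU : chromatic_number (V :\ [set x0; x1]) (@KG_adj _) (s + 2).
  by split=> //; apply: colorable_subset (subD1set _ _) (KG_stab_colorable s).
have chiV : chromatic_number V (@KG_adj _) (s + 2).
  split=> [|k /(colorable_subset (subD1set V [set x0; x1]))]; last exact: lbU.
  exact: KG_stab_colorable.
split=> // V_critical.
by have := V_critical _ (properD1 e0V) _ _ chiU chiV; rewrite ltnn.
Qed.
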